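(* Let $(\tau,T)$ be a dynamic pricing process with $P(\tau<\infty)=1$. Then $(\tau,T)$ is DIR compatible if and only if \[\lambda\int_0^\infty w_-\big(P(T(\tau)-s>y\mid T(\tau)>s)\big)dy\le\theta\quad\text{for all } s \text{ with } P(T(\tau)>s)>0.\]
   Context: Standing assumptions: $\theta>0$, $\lambda>0$; $w_+,w_-:[0,1]\to[0,1]$ strictly increasing, thrice differentiable, $w_\pm(0)=0$, $w_\pm(1)=1$, $w_\pm'(0)>1$, $w_\pm'(1)>1$, $w_\pm'''>0$. A cumulative payment function is $T:\mathbb{R}^+\to\mathbb{R}^+$ of the form $T(t)=\int_0^tf(s)ds+\sum_i1_{t_i<t}T_i$, with $f\ge0$ integrable and $(t_i),(T_i)$ countable sequences of nonnegative numbers, $t_i$ increasing. A stopping time is a random variable $\tau\in[0,\infty]$ whose CDF is the sum of a nondecreasing nonnegative absolutely continuous function and a nondecreasing nonnegative jump function. A dynamic pricing process is a pair $(\tau,T)$; it is DIR compatible if for every $s$ with $P(\tau>s)>0$, \[\theta\,w_+(P(\tau<\infty\mid\tau>s))-\lambda\int_0^\infty w_-\big(P(T(\tau)-T(s)>y\mid\tau>s)\big)dy\ge0.\] *)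

From HB Require Import structures.
From mathcomp Require Import all_boot all_order all_algebra.
From mathcomp Require Import all_classical all_reals all_analysis.
From mathcomp Require Import measurable_realfun.
Set Implicit Arguments. Unset Strict Implicit. Unset Printing Implicit Defensive.
Import Order.TTheory GRing.Theory Num.Theory.
Import numFieldNormedType.Exports.
Local Open Scope classical_set_scope.
Local Open Scope ring_scope.

Section defs.
Variable R : realType.

Definition deriv01 (f f' : R -> R) : Prop :=
  forall x, 0 <= x <= 1 ->
    (fun y => (f y - f x) / (y - x)) @ within [set y | 0 <= y <= 1 /\ y != x] (nbhs x)
      --> f' x.

Definition weighting (w : R -> R) : Prop :=
  (forall x, 0 <= x <= 1 -> 0 <= w x <= 1) /\
  (forall x y, 0 <= x <= 1 -> 0 <= y <= 1 -> x < y -> w x < w y) /\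
  w 0 = 0 /\ w 1 = 1 /\
  exists w1 w2 w3 : R -> R,
    [/\ deriv01 w w1, deriv01 w1 w2, deriv01 w2 w3,
        1 < w1 0 /\ 1 < w1 1 & forall x, 0 <= x <= 1 -> 0 < w3 x].

(* Cumulative payment function T(t) = int_0^t f + sum_i 1_{t_i < t} T_i on R^+. *)
Definition cumulative_payment (T : R -> R) : Prop :=
  exists (f : R -> R) (ti Ti : nat -> R),
    [/\ (forall x, 0 <= x -> 0 <= f x),
        (@lebesgue_measure R).-integrable `[0%R, +oo[%classic (EFin \o f),
        (forall i, 0 <= ti i /\ 0 <= Ti i),
        {homo ti : i j / (i <= j)%N >-> i <= j} &
        forall t, 0 <= t ->
          0 <= T t /\
          (fun n => \sum_(i < n) (if ti i < t then Ti i else 0)) @ \oo -->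
            T t - fine (\int[@lebesgue_measure R]_(x in `[0, t]) (f x)%:E)].

Definition abs_cont_Rp (F : R -> R) : Prop :=
  forall e : R, 0 < e -> exists2 d : R, 0 < d &
    forall (n : nat) (a b : nat -> R),
      (forall k, (k < n)%N -> 0 <= a k <= b k) ->
      (forall k, (k.+1 < n)%N -> b k <= a k.+1) ->
      \sum_(k < n) (b k - a k) < d ->
      \sum_(k < n) `|F (b k) - F (a k)| < e.

Definition jump_fn (J : R -> R) : Prop :=
  exists a u v : nat -> R,
    (forall i, [/\ 0 <= a i, 0 <= u i & 0 <= v i]) /\
    forall t, 0 <= t ->
      (fun n => \sum_(i < n) ((if a i < t then u i else 0) +
                              (if a i <= t then v i else 0))) @ \oo --> J t.

Definition nondecr_nonneg (F : R -> R) : Prop :=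
  (forall t, 0 <= t -> 0 <= F t) /\
  (forall s t, 0 <= s -> s <= t -> F s <= F t).

Context {d : measure_display} {Omega : measurableType d}.

Definition stopping_time (P : probability Omega R) (tau : Omega -> \bar R) : Prop :=
  [/\ measurable_fun [set: Omega] tau,
      (forall w, (0 <= tau w)%E) &
      exists Fa J : R -> R,
        [/\ nondecr_nonneg Fa, abs_cont_Rp Fa, nondecr_nonneg J, jump_fn J &
            forall t, 0 <= t -> fine (P [set w | (tau w <= t%:E)%E]) = Fa t + J t]].

Definition Tat (T : R -> R) (x : \bar R) : \bar R :=
  match x with
  | r%:E => (T r)%:E
  | +oo%E => ereal_sup [set (T r)%:E | r in [set r : R | 0 <= r]]
  | -oo%E => 0%E
  end.

Definition condP (P : probability Omega R) (A B : set Omega) : R :=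
  fine (P (A `&` B)) / fine (P B).

Definition dynamic_pricing_process (P : probability Omega R)
  (tau : Omega -> \bar R) (T : R -> R) : Prop :=
  stopping_time P tau /\ cumulative_payment T.

Definition DIR_compatible (theta lambda : R) (wp wm : R -> R)
  (P : probability Omega R) (tau : Omega -> \bar R) (T : R -> R) : Prop :=
  forall s : R, 0 <= s -> (0 < P [set w | (s%:E < tau w)%E])%E ->
    (0 <= (theta * wp (condP P [set w | (tau w < +oo)%E] [set w | (s%:E < tau w)%E]))%:E
         - lambda%:E *
           \int[@lebesgue_measure R]_(y in `[0%R, +oo[%classic)
              (wm (condP P [set w | (y%:E < Tat T (tau w) - (T s)%:E)%E]
                           [set w | (s%:E < tau w)%E]))%:E)%E.

End defs.

From HB Require Import structures.
From mathcomp Require Import all_boot all_order all_algebra.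
From mathcomp Require Import all_classical all_reals all_analysis.
From mathcomp Require Import measurable_realfun.
From mathcomp Require Import lra.
Set Implicit Arguments.
Unset Strict Implicit.
Unset Printing Implicit Defensive.
Import Order.TTheory GRing.Theory Num.Theory.
Import numFieldNormedType.Exports.
Local Open Scope classical_set_scope.
Local Open Scope ring_scope.

(* Since tau < +oo almost surely and wp 1 = 1, DIR compatibility at time s says that
   lambda times the loss integral of the excess of T(tau) over T(s), conditioned on
   {tau > s}, is at most theta.  The two families of bounds are compared through the
   events {tau > s} and {T(tau) > c}.  For c = T(s), {T(tau) > c} is contained in
   {tau > s}; conversely, for a level c the crossing time t0 = sup {t | T t <= c}
   satisfies T(t0) <= c (a cumulative payment is lower semicontinuous from the left),
   so {tau > t0} is contained in {T(tau) > c}.  In both directions, conditioning on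
   B2 inside B1, the excess event A1 /\ B1 is contained in A2 /\ B2, hence
   P(A1 | B1) <= P(A2 | B2) for every y and the weighted loss integral can only grow;
   if P(B2) = 0, the integrand vanishes because wm 0 = 0. *)

Section cumulative_payment.
Variables (R : realType) (f : R -> R) (ti Ti : nat -> R) (T : R -> R).
Hypothesis f_ge0 : forall x, 0 <= x -> 0 <= f x.
Hypothesis f_int : (@lebesgue_measure R).-integrable `[0%R, +oo[%classic (EFin \o f).
Hypothesis tiTi_ge0 : forall i, 0 <= ti i /\ 0 <= Ti i.

Let mu := @lebesgue_measure R.

Definition density_integral (t : R) : R := fine (\int[mu]_(x in `[0, t]) (f x)%:E).

Definition jump_partial_sum (t : R) (n : nat) : R :=
  \sum_(i < n) (if ti i < t then Ti i else 0).

Hypothesis T_decomp : forall t, 0 <= t ->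
  jump_partial_sum t @ \oo --> T t - density_integral t.

Let f_int_itv t : 0 <= t -> mu.-integrable `[0, t] (EFin \o f).
Proof.
by move=> t0; apply: integrableS f_int => //= x /=; rewrite !in_itv /= => /andP[->].
Qed.

Lemma density_integral0 : density_integral 0 = 0.
Proof. by rewrite /density_integral set_itv1 integral_set1. Qed.

Lemma density_integral_le s t : 0 <= s -> s <= t ->
  density_integral s <= density_integral t.
Proof.
move=> s0 st; have t0 := le_trans s0 st.
apply: fine_le; [exact: integrable_fin_num (f_int_itv s0)
                |exact: integrable_fin_num (f_int_itv t0)|].
apply: ge0_subset_integral => //=.
- apply: measurable_funS (measurable_int mu f_int) => //= x /=.
  by rewrite !in_itv /= => /andP[->].
- by move=> x /=; rewrite in_itv /= lee_fin => /andP[/f_ge0].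
- by apply: subset_itvl; rewrite bnd_simp.
Qed.

Lemma density_integral_cvg_left t0 : 0 < t0 ->
  density_integral t @[t --> t0^'-] --> density_integral t0.
Proof.
move=> t0_gt0.
have := parameterized_integral_continuous (ltW t0_gt0) (f_int_itv (ltW t0_gt0)).
by move=> /(continuous_within_itvP _ t0_gt0) [_ _].
Qed.

Lemma jump_partial_sum_nondecreasing t : nondecreasing_seq (jump_partial_sum t).
Proof.
apply/nondecreasing_seqP => n; rewrite /jump_partial_sum big_ord_recr /= lerDl.
by case: ifP => // _; case: (tiTi_ge0 n).
Qed.

Lemma jump_partial_sum_le s t n : s <= t ->
  jump_partial_sum s n <= jump_partial_sum t n.
Proof.
move=> st; apply: ler_sum => i _; case: ifP => [tis|_].
  by rewrite (lt_le_trans tis st).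
by case: ifP => //; case: (tiTi_ge0 i).
Qed.

Lemma jump_partial_sum_le_lim t n : 0 <= t ->
  jump_partial_sum t n <= T t - density_integral t.
Proof.
move=> t0; have hT := T_decomp t0.
have := nondecreasing_cvgn_le (@jump_partial_sum_nondecreasing t) (cvgP _ hT) n.
by rewrite (cvg_lim (@Rhausdorff R) hT).
Qed.

Lemma near_jump_partial_sum_left t0 N :
  \forall t \near t0^'-, jump_partial_sum t N = jump_partial_sum t0 N.
Proof.
elim: N => [|N IH]; first by apply: nearW => t; rewrite /jump_partial_sum !big_ord0.
have near_ti : \forall t \near t0^'-, (ti N < t) = (ti N < t0).
  case: (ltP (ti N) t0) => [tiN|t0tiN].
    by apply: filterS (nbhs_left_gt tiN) => t ->.
  apply: filterS (nbhs_left_lt t0) => t tt0.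
  by apply/negbTE; rewrite -leNgt (le_trans (ltW tt0)).
apply: filterS2 IH near_ti => t IHt tiNt.
by rewrite /jump_partial_sum !big_ord_recr /= -!/(jump_partial_sum _ _) IHt tiNt.
Qed.

Lemma payment0 : T 0 = 0.
Proof.
have cvg0 : jump_partial_sum 0 @ \oo --> 0.
  apply: cvg_near_cst; apply: nearW => n; apply: big1 => i _.
  by case: ifP => //; case: (tiTi_ge0 i) => ti0 _; rewrite ltNge ti0.
have := @cvg_unique _ (@Rhausdorff R) _ (fmap_proper_filter _ eventually_filter) _ _
  (T_decomp (lexx 0)) cvg0.
by rewrite density_integral0 subr0.
Qed.

Lemma payment_le s t : 0 <= s -> s <= t -> T s <= T t.
Proof.
move=> s0 st; have t0 := le_trans s0 st.
have : T s - density_integral s <= T t - density_integral t.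
  apply: (ler_cvg_to (T_decomp s0) (T_decomp t0)).
  by apply: nearW => n; exact: jump_partial_sum_le.
have := density_integral_le s0 st; lra.
Qed.

(* The jumps are counted at [ti < t], which makes T lower semicontinuous from the left. *)
Lemma payment_near_left t0 e : 0 < t0 -> 0 < e ->
  \forall t \near t0^'-, T t0 - e < T t.
Proof.
move=> t0_gt0 e_gt0; have e2_gt0 : 0 < e / 2 by rewrite divr_gt0.
have [N _ HN] := (cvgrPdist_lt _ _).1 (T_decomp (ltW t0_gt0)) _ e2_gt0.
have tail : T t0 - density_integral t0 - jump_partial_sum t0 N < e / 2.
  have := ler_norm (T t0 - density_integral t0 - jump_partial_sum t0 N).
  by have := HN N (leqnn N); lra.
have /cvgrPdist_lt /(_ _ e2_gt0) near_int := density_integral_cvg_left t0_gt0.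
near=> t.
have t_gt0 : 0 < t by near: t; exact: nbhs_left_gt.
have := jump_partial_sum_le_lim N (ltW t_gt0).
rewrite (near (near_jump_partial_sum_left t0 N) t) //.
have : `|density_integral t0 - density_integral t| < e / 2 by near: t.
have := ler_norm (density_integral t0 - density_integral t); lra.
Unshelve. all: by end_near.
Qed.

Lemma payment_le_left t0 c : 0 < t0 ->
  (forall t, 0 <= t -> t < t0 -> T t <= c) -> T t0 <= c.
Proof.
move=> t0_gt0 Tc; rewrite leNgt; apply/negP => cT.
have e_gt0 : 0 < T t0 - c by rewrite subr_gt0.
near (t0^'-) => t.
have t_gt0 : 0 < t by near: t; exact: nbhs_left_gt.
have : T t <= c by apply: Tc (ltW t_gt0) _; near: t; exact: nbhs_left_lt.
have : T t0 - (T t0 - c) < T t by near: t; exact: payment_near_left.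
lra.
Unshelve. all: by end_near.
Qed.

End cumulative_payment.

Lemma weighting_ge0 (R : realType) (w : R -> R) :
  weighting w -> forall x, 0 <= x <= 1 -> 0 <= w x.
Proof. by case=> w01 _ x /w01 /andP[]. Qed.

Lemma weighting_le (R : realType) (w : R -> R) : weighting w ->
  forall x y, 0 <= x <= 1 -> 0 <= y <= 1 -> x <= y -> w x <= w y.
Proof.
case=> _ [w_lt _] x y x01 y01; rewrite le_eqVlt => /orP[/eqP->//|xy].
exact/ltW/w_lt.
Qed.

Section conditional_probability.
Variables (R : realType) (d : measure_display) (Omega : measurableType d).
Variable P : probability Omega R.

Definition pr (A : set Omega) : R := fine (P A).

Lemma prE A : measurable A -> P A = (pr A)%:E.
Proof. by move=> mA; rewrite fineK // fin_num_measure. Qed.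

Lemma pr_ge0 A : 0 <= pr A.
Proof. exact: fine_ge0. Qed.

Lemma le_pr A B : measurable A -> measurable B -> A `<=` B -> pr A <= pr B.
Proof.
by move=> mA mB AB; rewrite -lee_fin -!prE //; apply: le_measure; rewrite ?inE.
Qed.

Lemma condP_ge0 A B : 0 <= condP P A B.
Proof. by rewrite divr_ge0 // fine_ge0. Qed.

Lemma condP_le1 A B : measurable A -> measurable B -> condP P A B <= 1.
Proof.
move=> mA mB; rewrite /condP -!/(pr _).
have [->|pB_gt0] := eqVneq (pr B) 0; first by rewrite invr0 mulr0.
rewrite ler_pdivrMr ?mul1r ?lt_def ?pB_gt0 ?pr_ge0 //.
exact: le_pr (measurableI _ _ mA mB) mB (@subIsetr _ _ _).
Qed.

Lemma le_condP A1 A2 B : measurable A1 -> measurable A2 -> measurable B ->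
  A1 `<=` A2 -> condP P A1 B <= condP P A2 B.
Proof.
move=> mA1 mA2 mB A12; rewrite /condP -!/(pr _).
apply: ler_wpM2r; first by rewrite invr_ge0 pr_ge0.
by apply: le_pr; [exact: measurableI|exact: measurableI|exact: setSI].
Qed.

Lemma le_condP_restrict A1 B1 A2 B2 :
  measurable A1 -> measurable B1 -> measurable A2 -> measurable B2 ->
  A1 `&` B1 `<=` A2 `&` B2 -> B2 `<=` B1 -> 0 < pr B2 ->
  condP P A1 B1 <= condP P A2 B2.
Proof.
move=> mA1 mB1 mA2 mB2 AB12 B21 pB2_gt0; rewrite /condP -!/(pr _).
apply: (@le_trans _ _ (pr (A2 `&` B2) / pr B1)).
  apply: ler_wpM2r; first by rewrite invr_ge0 pr_ge0.
  by apply: le_pr; [exact: measurableI|exact: measurableI|].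
have pB21 := le_pr mB2 mB1 B21.
by rewrite ler_wpM2l ?pr_ge0 // lef_pV2 ?posrE // (lt_le_trans pB2_gt0).
Qed.

Lemma condP_eq0 A B C : measurable A -> measurable B -> measurable C ->
  A `&` B `<=` C -> pr C = 0 -> condP P A B = 0.
Proof.
move=> mA mB mC ABC pC0; rewrite /condP -!/(pr _).
suff -> : pr (A `&` B) = 0 by rewrite mul0r.
by apply/le_anti; rewrite pr_ge0 -pC0 le_pr //; exact: measurableI.
Qed.

Lemma condP_almost_sure A B : measurable A -> measurable B ->
  P A = 1%E -> (0 < P B)%E -> condP P A B = 1.
Proof.
move=> mA mB PA1 PB_gt0.
have PBA0 : P (B `\` A) = 0%E.
  apply/le_anti; rewrite measure_ge0 andbT.
  apply: (@le_trans _ _ (P (~` A))); last by rewrite probability_setC // PA1 subee.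
  by apply: le_measure; rewrite ?inE; [exact: measurableD|exact: measurableC|move=> ? []].
have PAB : P (A `&` B) = P B.
  by rewrite setIC [RHS](measureDI P mB mA) [X in (X + _)%E](_ : _ = 0%E) ?add0e.
rewrite /condP PAB divff //.
by rewrite gt_eqF // fine_gt0 // PB_gt0 (le_lt_trans (probability_le1 _ _)) ?ltry.
Qed.

End conditional_probability.

Section loss_integral.
Variables (R : realType) (d : measure_display) (Omega : measurableType d).
Variables (P : probability Omega R) (w : R -> R).
Hypothesis wW : weighting w.

Definition loss_integral (N : R -> set Omega) (B : set Omega) : \bar R :=
  \int[@lebesgue_measure R]_(y in `[0%R, +oo[%classic) (w (condP P (N y) B))%:E.

Let weighted_condP_measurable (N : R -> set Omega) (B : set Omega) :
  (forall y, measurable (N y)) -> measurable B -> (forall y y', y <= y' -> N y' `<=` N y) ->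
  measurable_fun (`[0%R, +oo[%classic : set R) (fun y => (w (condP P (N y) B))%:E).
Proof.
move=> mN mB N_anti; apply/measurable_EFinP; apply: nonincreasing_measurable => // y y' yy'.
by apply: weighting_le; rewrite ?condP_ge0 ?condP_le1 //; apply: le_condP; last exact: N_anti.
Qed.

Variables (N1 N2 : R -> set Omega) (B1 B2 : set Omega).
Hypotheses (mN1 : forall y, measurable (N1 y)) (mN2 : forall y, measurable (N2 y)).
Hypotheses (N1_anti : forall y y', y <= y' -> N1 y' `<=` N1 y).
Hypotheses (N2_anti : forall y y', y <= y' -> N2 y' `<=` N2 y).
Hypotheses (mB1 : measurable B1) (mB2 : measurable B2).
Hypothesis N12 : forall y, 0 <= y -> N1 y `&` B1 `<=` N2 y `&` B2.

Lemma le_loss_integral : B2 `<=` B1 -> 0 < pr P B2 ->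
  (loss_integral N1 B1 <= loss_integral N2 B2)%E.
Proof.
move=> B21 pB2_gt0; apply: ge0_le_integral => //.
- by move=> y _; rewrite lee_fin weighting_ge0 ?condP_ge0 ?condP_le1.
- exact: weighted_condP_measurable.
- exact: weighted_condP_measurable.
move=> y; rewrite /= in_itv /= andbT lee_fin => y_ge0.
apply: weighting_le; rewrite ?condP_ge0 ?condP_le1 //.
exact: le_condP_restrict (N12 y_ge0) B21 pB2_gt0.
Qed.

Lemma loss_integral_eq0 : pr P B2 = 0 -> loss_integral N1 B1 = 0%E.
Proof.
move=> pB2_0; apply: integral0_eq => y; rewrite /= in_itv /= andbT => y_ge0.
have -> : condP P (N1 y) B1 = 0.
  by apply: condP_eq0 mB2 _ pB2_0 => // x /(N12 y_ge0) [].
by case: wW => _ [_ [-> _]].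
Qed.

Lemma loss_integral_bound_restrict (theta lambda : R) :
  0 <= theta -> 0 <= lambda -> B2 `<=` B1 ->
  (0 < pr P B2 -> (lambda%:E * loss_integral N2 B2 <= theta%:E)%E) ->
  (lambda%:E * loss_integral N1 B1 <= theta%:E)%E.
Proof.
move=> theta_ge0 lambda_ge0 B21 bound2.
have [pB2_gt0|] := ltP 0 (pr P B2).
  apply: le_trans (bound2 pB2_gt0); rewrite lee_wpmul2l ?lee_fin //.
  exact: le_loss_integral.
rewrite le_eqVlt ltNge pr_ge0 orbF => /eqP pB2_0.
by rewrite loss_integral_eq0 // mule0 lee_fin.
Qed.

End loss_integral.

Section total_payment.
Variables (R : realType) (T : R -> R).

Lemma Tat_gt c x : (0 <= x)%E -> (c%:E < Tat T x)%E -> exists2 r, 0 <= r & c < T r.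
Proof.
case: x => [r| |] //=; first by rewrite lee_fin lte_fin; exists r.
by move=> _ /ereal_sup_gt [_ [r /= r_ge0 <-]]; rewrite lte_fin; exists r.
Qed.

Hypothesis T_le : forall s t, 0 <= s -> s <= t -> T s <= T t.

Lemma Tat_le x y : (0 <= x)%E -> (x <= y)%E -> (Tat T x <= Tat T y)%E.
Proof.
case: x => [r| |] // r_ge0; case: y => [r'| |] //=; rewrite ?lee_fin => rr'.
- exact: T_le.
- by apply: ereal_sup_ubound; exists r.
Qed.

Hypothesis T0 : T 0 = 0.
Hypothesis T_le_left : forall t0 c, 0 < t0 ->
  (forall t, 0 <= t -> t < t0 -> T t <= c) -> T t0 <= c.

Lemma exists_payment_crossing c r : 0 <= c -> 0 <= r -> c < T r ->
  exists2 t0, 0 <= t0 & T t0 <= c /\ forall t, t0 < t -> c < T t.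
Proof.
move=> c_ge0 r_ge0 cTr.
pose A := [set t | 0 <= t /\ T t <= c].
have A0 : A 0 by split; rewrite ?T0.
have A_ub : ubound A r.
  move=> t [t_ge0 Ttc]; rewrite leNgt; apply/negP => rt.
  by have := T_le r_ge0 (ltW rt); rewrite leNgt (le_lt_trans Ttc cTr).
have A_sup : has_sup A by split; [exists 0 | exists r].
have t0_ge0 := ub_le_sup A_sup.2 A0.
exists (sup A) => //; split; last first.
  move=> t t0t; rewrite ltNge; apply/negP => Ttc.
  have At : A t by split => //; exact: le_trans (ltW t0t).
  by have := ub_le_sup A_sup.2 At; rewrite leNgt t0t.
move: t0_ge0; rewrite le_eqVlt => /orP[/eqP <-|t0_gt0]; first by rewrite T0.
apply: T_le_left => // t t_ge0 tt0.
have gap_gt0 : 0 < sup A - t by rewrite subr_gt0.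
have [a [a_ge0 Tac] ta] := sup_adherent gap_gt0 A_sup.
by apply: le_trans Tac; apply: T_le => //; apply: ltW; rewrite opprB addrC subrK in ta.
Qed.

End total_payment.

Section pricing_events.
Variables (R : realType) (d : measure_display) (Omega : measurableType d).
Variables (tau : Omega -> \bar R) (T : R -> R).
Hypotheses (tau_meas : measurable_fun setT tau) (tau_ge0 : forall w, (0 <= tau w)%E).
Hypothesis T_le : forall s t, 0 <= s -> s <= t -> T s <= T t.

(* An up-closed subset of [0, +oo] is an interval [a, +oo] or ]a, +oo] with a its infimum. *)
Lemma measurable_preimage_upclosed (U : \bar R -> Prop) :
  (forall x y, (0 <= x)%E -> (x <= y)%E -> U x -> U y) ->
  measurable [set w | U (tau w)].
Proof.
move=> U_up; pose a := ereal_inf [set x | (0 <= x)%E /\ U x].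
have [[a_ge0 Ua]|notUa] := pselect ((0 <= a)%E /\ U a).
- have -> : [set w | U (tau w)] = tau @^-1` `[a, +oo[.
    apply/seteqP; split => w /=; rewrite in_itv /= andbT.
      by move=> Uw; apply: ereal_inf_lbound; split.
    by move=> aw; exact: U_up aw Ua.
  by rewrite -[X in measurable X]setTI; apply: tau_meas => //; exact: emeasurable_itv.
- have -> : [set w | U (tau w)] = tau @^-1` `]a, +oo[.
    apply/seteqP; split => w /=; rewrite in_itv /= andbT.
      move=> Uw; rewrite lt_neqAle ereal_inf_lbound ?andbT; last by split.
      by apply/eqP => aw; apply: notUa; rewrite aw.
    by move=> /ereal_inf_lt [y [y_ge0 Uy] yw]; exact: U_up (ltW yw) Uy.
  by rewrite -[X in measurable X]setTI; apply: tau_meas => //; exact: emeasurable_itv.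
Qed.

Definition tau_gt (s : R) := [set w | (s%:E < tau w)%E].
Definition payment_gt (c : R) := [set w | (c%:E < Tat T (tau w))%E].
Definition payment_excess (c y : R) := [set w | (y%:E < Tat T (tau w) - c%:E)%E].

Lemma measurable_tau_gt s : measurable (tau_gt s).
Proof.
apply: (measurable_preimage_upclosed (U := fun x => (s%:E < x)%E)).
by move=> x y _ xy sx; exact: lt_le_trans xy.
Qed.

Lemma measurable_payment_gt c : measurable (payment_gt c).
Proof.
apply: (measurable_preimage_upclosed (U := fun x => (c%:E < Tat T x)%E)).
move=> x y x_ge0 xy cx.
exact: lt_le_trans cx (Tat_le T_le x_ge0 xy).
Qed.

Lemma measurable_payment_excess c y : measurable (payment_excess c y).
Proof.
apply: (measurable_preimage_upclosed (U := fun x => (y%:E < Tat T x - c%:E)%E)).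
move=> x x' x_ge0 xx'; rewrite !lteBrDl // => yx.
exact: lt_le_trans yx (Tat_le T_le x_ge0 xx').
Qed.

Lemma payment_excess_anti c y y' : y <= y' -> payment_excess c y' `<=` payment_excess c y.
Proof. by move=> yy' w; apply: le_lt_trans; rewrite lee_fin. Qed.

Lemma payment_excess_le c c' y : c' <= c -> payment_excess c y `<=` payment_excess c' y.
Proof.
by move=> c'c w yc; apply: lt_le_trans yc _; rewrite leeB // lee_fin.
Qed.

Lemma payment_excess_sub_gt c y : 0 <= y -> payment_excess c y `<=` payment_gt c.
Proof.
move=> y_ge0 w; rewrite /payment_excess /payment_gt /=.
case: (Tat T (tau w)) => [r| |] //=; rewrite ?ltry //.
by rewrite -EFinD !lte_fin => ycr; rewrite -subr_gt0 (le_lt_trans y_ge0 ycr).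
Qed.

Lemma payment_gt_sub_tau_gt s c : T s <= c -> payment_gt c `<=` tau_gt s.
Proof.
move=> Tsc w; rewrite /payment_gt /tau_gt /=.
have := tau_ge0 w; case: (tau w) => [r| |] //=; rewrite ?ltry //.
rewrite lee_fin !lte_fin => r_ge0 cTr; rewrite ltNge; apply/negP => rs.
by have := le_trans (T_le r_ge0 rs) Tsc; rewrite leNgt cTr.
Qed.

Lemma tau_gt_sub_payment_gt t0 c : 0 <= t0 -> (forall t, t0 < t -> c < T t) ->
  tau_gt t0 `<=` payment_gt c.
Proof.
move=> t0_ge0 crossed w; rewrite /payment_gt /tau_gt /=.
case: (tau w) => [r| |] //=; rewrite ?lte_fin; first exact: crossed.
move=> _; apply: (@lt_le_trans _ _ (T (t0 + 1))%:E); first by rewrite lte_fin crossed ?ltrDl.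
by apply: ereal_sup_ubound; exists (t0 + 1) => //; exact: addr_ge0.
Qed.

End pricing_events.

Lemma cumulative_payment_regular (R : realType) (T : R -> R) : cumulative_payment T ->
  [/\ T 0 = 0, forall s t, 0 <= s -> s <= t -> T s <= T t &
      forall t0 c, 0 < t0 -> (forall t, 0 <= t -> t < t0 -> T t <= c) -> T t0 <= c].
Proof.
case=> f [ti] [Ti] [f_ge0 f_int tiTi_ge0 _ T_decomp].
have {}T_decomp t : 0 <= t ->
    jump_partial_sum ti Ti t @ \oo --> T t - density_integral f t.
  by move=> /T_decomp[].
split; first exact: payment0 tiTi_ge0 T_decomp.
- exact: payment_le f_ge0 f_int tiTi_ge0 T_decomp.
- exact: payment_le_left f_int tiTi_ge0 T_decomp.
Qed.

Section DIR_compatibility.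
Variables (R : realType) (d : measure_display) (Omega : measurableType d).
Variables (P : probability Omega R) (tau : Omega -> \bar R) (T : R -> R).
Variables (theta lambda : R) (wp wm : R -> R).
Hypotheses (theta_ge0 : 0 <= theta) (lambda_ge0 : 0 <= lambda).
Hypotheses (wp1 : wp 1 = 1) (wmW : weighting wm).
Hypotheses (tau_meas : measurable_fun setT tau) (tau_ge0 : forall w, (0 <= tau w)%E).
Hypothesis tau_finite : P [set w | (tau w < +oo)%E] = 1%E.
Hypothesis T_le : forall s t, 0 <= s -> s <= t -> T s <= T t.

Let mN c : forall y, measurable (payment_excess tau T c y).
Proof. exact: measurable_payment_excess. Qed.

Let N_anti c :
  forall y y', y <= y' -> payment_excess tau T c y' `<=` payment_excess tau T c y.
Proof. exact: payment_excess_anti. Qed.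

Let m_tau_gt s : measurable (tau_gt tau s).
Proof. exact: measurable_tau_gt. Qed.

Let m_payment_gt c : measurable (payment_gt tau T c).
Proof. exact: measurable_payment_gt. Qed.

Local Notation tau_loss_bounded :=
  (forall s, 0 <= s -> (0 < P (tau_gt tau s))%E ->
    (lambda%:E * loss_integral P wm (payment_excess tau T (T s)) (tau_gt tau s)
       <= theta%:E)%E).

Local Notation payment_loss_bounded :=
  (forall c, 0 <= c -> (0 < P (payment_gt tau T c))%E ->
    (lambda%:E * loss_integral P wm (payment_excess tau T c) (payment_gt tau T c)
       <= theta%:E)%E).

Lemma DIR_compatibleE : DIR_compatible theta lambda wp wm P tau T <-> tau_loss_bounded.
Proof.
have gainE s : (0 < P (tau_gt tau s))%E -> forall I,
    (0 <= (theta * wp (condP P [set w | (tau w < +oo)%E] (tau_gt tau s)))%:E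
          - lambda%:E * I)%E = (lambda%:E * I <= theta%:E)%E.
  move=> Ps_gt0 I; rewrite condP_almost_sure ?wp1 ?mulr1 ?sube_ge0 //.
  - by rewrite orbC fin_numE.
  - rewrite -[X in measurable X]setTI.
    by rewrite -preimage_itvNyo; apply: tau_meas => //; exact: emeasurable_itv.
by split => bound s s_ge0 Ps_gt0; have := bound s s_ge0 Ps_gt0; rewrite gainE.
Qed.

Hypothesis T0 : T 0 = 0.
Hypothesis T_le_left : forall t0 c, 0 < t0 ->
  (forall t, 0 <= t -> t < t0 -> T t <= c) -> T t0 <= c.

Lemma payment_loss_bounded_of_tau : tau_loss_bounded -> payment_loss_bounded.
Proof.
move=> tau_bound c c_ge0 Pc_gt0.
have [w cw] : exists w, payment_gt tau T c w.
  by apply/set0P/eqP => c_empty; move: Pc_gt0; rewrite c_empty measure0 ltxx.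
have [r r_ge0 cTr] := Tat_gt (tau_ge0 w) cw.
have [t0 t0_ge0 [Tt0c crossed]] := exists_payment_crossing T_le T0 T_le_left c_ge0 r_ge0 cTr.
apply: (loss_integral_bound_restrict wmW (mN c) (mN (T t0)) (@N_anti c) (@N_anti (T t0))
         (m_payment_gt c) (m_tau_gt t0)) => //.
- move=> y y_ge0 x [excess_x cx]; split; first exact: payment_excess_le Tt0c _ excess_x.
  exact: payment_gt_sub_tau_gt Tt0c _ cx.
- exact: tau_gt_sub_payment_gt.
- by move=> pt0_gt0; apply: tau_bound; rewrite // prE ?lte_fin.
Qed.

Lemma tau_loss_bounded_of_payment : payment_loss_bounded -> tau_loss_bounded.
Proof.
move=> payment_bound s s_ge0 _.
have Ts_ge0 : 0 <= T s by rewrite -T0 T_le.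
apply: (loss_integral_bound_restrict wmW (mN (T s)) (mN (T s)) (@N_anti (T s)) (@N_anti (T s))
         (m_tau_gt s) (m_payment_gt (T s))) => //.
- by move=> y y_ge0 x [excess_x _]; split; last exact: payment_excess_sub_gt excess_x.
- exact: payment_gt_sub_tau_gt.
- by move=> pc_gt0; apply: payment_bound; rewrite // prE ?lte_fin.
Qed.

End DIR_compatibility.

Theorem lemma3 (R : realType) (theta lambda : R) (wp wm : R -> R)
  (d : measure_display) (Omega : measurableType d) (P : probability Omega R)
  (tau : Omega -> \bar R) (T : R -> R) :
  0 < theta -> 0 < lambda -> weighting wp -> weighting wm ->
  dynamic_pricing_process P tau T ->
  P [set w | (tau w < +oo)%E] = 1%E ->
  (DIR_compatible theta lambda wp wm P tau T <->
   forall s : R, 0 <= s -> (0 < P [set w | (s%:E < Tat T (tau w))%E])%E ->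
     (lambda%:E *
        \int[@lebesgue_measure R]_(y in `[0%R, +oo[%classic)
           (wm (condP P [set w | (y%:E < Tat T (tau w) - s%:E)%E]
                        [set w | (s%:E < Tat T (tau w))%E]))%:E <= theta%:E)%E).
Proof.
move=> theta_gt0 lambda_gt0 [_ [_ [_ [wp1 _]]]] wmW [[tau_meas tau_ge0 _] payT] tau_finite.
have [T0 T_le T_le_left] := cumulative_payment_regular payT.
have [theta_ge0 lambda_ge0] := (ltW theta_gt0, ltW lambda_gt0).
rewrite DIR_compatibleE //; split.
- exact: payment_loss_bounded_of_tau.
- exact: tau_loss_bounded_of_payment.
Qed.
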